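(* Let $(\mathfrak g,\mathfrak k,\theta)$ be a reductive symmetric superpair and $x\in\mathfrak p_0$. Then \[\dim\mathfrak z_{\mathfrak k_1}(x)-\dim\mathfrak z_{\mathfrak p_1}(x)=\dim\mathfrak k_1-\dim\mathfrak p_1,\] where $\mathfrak z_{V}(x)=\{y\in V:[x,y]=0\}$.
   Context: A symmetric superpair $(\mathfrak g,\mathfrak k,\theta)$: finite-dimensional complex Lie superalgebra $\mathfrak g$, even involutive automorphism $\theta$, $\mathfrak k,\mathfrak p$ the $(+1),(-1)$-eigenspaces, $\mathfrak k_j=\mathfrak k\cap\mathfrak g_j$, $\mathfrak p_j=\mathfrak p\cap\mathfrak g_j$. Reductive: $\mathfrak g$ semisimple as $\mathfrak g_0$-module, $\mathfrak z(\mathfrak g)\subset\mathfrak g_0$, and there is a non-degenerate even supersymmetric $\mathfrak g$- and $\theta$-invariant bilinear form $b$ on $\mathfrak g$. *)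

(* Parities are booleans (false = even). *)
From HB Require Import structures.
From mathcomp Require Import all_boot all_order all_algebra.
Set Implicit Arguments. Unset Strict Implicit. Unset Printing Implicit Defensive.
Import GRing.Theory.
Local Open Scope ring_scope.

Section Super.
Variables (F : fieldType) (V : vectType F).

Definition gpart (g0 g1 : {vspace V}) (i : bool) : {vspace V} :=
  if i then g1 else g0.

Definition ssign (i j : bool) : F := (-1) ^+ (i && j).

Definition bilinear_br (br : V -> V -> V) : Prop :=
  (forall (a : F) x y z, br (a *: x + y) z = a *: br x z + br y z) /\
  (forall (a : F) x y z, br z (a *: x + y) = a *: br z x + br z y).

Definition bilinear_form (b : V -> V -> F) : Prop :=
  (forall (a : F) x y z, b (a *: x + y) z = a * b x z + b y z) /\
  (forall (a : F) x y z, b z (a *: x + y) = a * b z x + b z y).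

Definition is_lie_superalgebra (g0 g1 : {vspace V}) (br : V -> V -> V) : Prop :=
  [/\ ((g0 + g1)%VS = fullv /\ directv (g0 + g1)),
      bilinear_br br,
      (forall i j x y, x \in gpart g0 g1 i -> y \in gpart g0 g1 j ->
         br x y \in gpart g0 g1 (i (+) j)),
      (forall i j x y, x \in gpart g0 g1 i -> y \in gpart g0 g1 j ->
         br x y = - (ssign i j *: br y x)) &
      (forall i j x y z, x \in gpart g0 g1 i -> y \in gpart g0 g1 j ->
         br x (br y z) = br (br x y) z + ssign i j *: br y (br x z))].

Definition is_even_involution (g0 g1 : {vspace V}) (br : V -> V -> V)
    (theta : 'End(V)) : Prop :=
  [/\ (theta \o theta)%VF = \1%VF,
      (forall x y, theta (br x y) = br (theta x) (theta y)),
      (theta @: g0 <= g0)%VS & (theta @: g1 <= g1)%VS].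

Definition kspace (theta : 'End(V)) : {vspace V} := lker (theta - \1%VF).
Definition pspace (theta : 'End(V)) : {vspace V} := lker (theta + \1%VF).

Definition g0_stable (g0 : {vspace V}) (br : V -> V -> V) (W : {vspace V}) : Prop :=
  forall x w, x \in g0 -> w \in W -> br x w \in W.

Definition g0_semisimple (g0 : {vspace V}) (br : V -> V -> V) : Prop :=
  forall W : {vspace V}, g0_stable g0 br W ->
    exists W' : {vspace V},
      [/\ g0_stable g0 br W', (W + W')%VS = fullv & (W :&: W')%VS = 0%VS].

Definition reductive_symmetric_superpair (g0 g1 : {vspace V})
    (br : V -> V -> V) (theta : 'End(V)) : Prop :=
  [/\ is_lie_superalgebra g0 g1 br,
      is_even_involution g0 g1 br theta,
      g0_semisimple g0 br,
      (forall x, (forall y, br x y = 0) -> x \in g0) &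
      exists b : V -> V -> F,
        [/\ bilinear_form b /\
            (forall x y, x \in g0 -> y \in g1 -> b x y = 0 /\ b y x = 0),
            (forall i j x y, x \in gpart g0 g1 i -> y \in gpart g0 g1 j ->
               b x y = ssign i j * b y x),
            (forall x y z, b (br x y) z = b x (br y z)),
            (forall x y, b (theta x) (theta y) = b x y) &
            (forall x, (forall y, b x y = 0) -> x = 0)]].

Definition centralizer_in (br : V -> V -> V) (U : {vspace V}) (x : V) : {vspace V} :=
  (U :&: lker (linfun (br x)))%VS.

End Super.

(** Since [theta x = - x], the map [ad x] swaps the odd parts [k1] and [p1],
    and by invariance of [b] it is skew-adjoint for [b].  The form [b]
    restricts to non-degenerate forms on [k1] and on [p1] (as [g0], [k] and
    [p] split orthogonally), so the two restrictions [ad x : k1 -> p1] and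
    [ad x : p1 -> k1], being adjoint to each other up to sign, have the same
    rank.  Rank-nullity on both sides gives the identity. *)
From HB Require Import structures.
From mathcomp Require Import all_boot all_order all_algebra.
Set Implicit Arguments. Unset Strict Implicit. Unset Printing Implicit Defensive.
Import GRing.Theory.
Local Open Scope ring_scope.

Section LinearFun.
Variables (R : pzRingType) (U W : lmodType R) (f : U -> W).
Hypothesis lin_f : linear f.

Let fL : {linear U -> W} := HB.pack f (GRing.isLinear.Build R U W *:%R f lin_f).

Lemma linear_fun0 : f 0 = 0. Proof. exact: (raddf0 fL). Qed.
Lemma linear_funN u : f (- u) = - f u. Proof. exact: (raddfN fL). Qed.
Lemma linear_funD u v : f (u + v) = f u + f v. Proof. exact: (raddfD fL). Qed.

End LinearFun.

Lemma linfunE_linear (F : fieldType) (aT rT : vectType F) (f : aT -> rT) :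
  linear f -> linfun f =1 f.
Proof.
by move=> lin_f; exact: (lfunE (HB.pack f (GRing.isLinear.Build F aT rT *:%R f lin_f))).
Qed.

Section Bilinear.
Variables (F : fieldType) (V : vectType F).

Lemma bracket_linear_l (br : V -> V -> V) : bilinear_br br -> forall z, linear (br^~ z).
Proof. by move=> [lin_l _] z a x y; exact: lin_l. Qed.

Lemma bracket_linear_r (br : V -> V -> V) : bilinear_br br -> forall z, linear (br z).
Proof. by move=> [_ lin_r] z a x y; exact: lin_r. Qed.

Variables (b : V -> V -> F).
Hypothesis bilin_b : bilinear_form b.

Lemma form_linear_l z : linear (b^~ z : V -> F^o).
Proof. by case: bilin_b => lin_l _ a x y; exact: lin_l. Qed.

Lemma form_linear_r z : linear (b z : V -> F^o).
Proof. by case: bilin_b => _ lin_r a x y; exact: lin_r. Qed.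

Lemma form_nondegenerate_on (W C : {vspace V}) :
    (forall y, (forall z, b y z = 0) -> y = 0) -> (W + C)%VS = fullv ->
    {in W & C, forall w c, b w c = 0} ->
  {in W, forall w, {in W, forall z, b w z = 0} -> w = 0}.
Proof.
move=> nondeg_b WC_full orth_WC w wW orth_wW; apply: nondeg_b => y.
have /memv_addP[z zW [c cC ->]] : y \in (W + C)%VS by rewrite WC_full memvf.
by rewrite (linear_funD (form_linear_r w)) orth_wW ?orth_WC ?addr0.
Qed.

Lemma dim_limg_le_skew_adjoint (f : 'End(V)) (K P : {vspace V}) :
    {in K & P, forall y z, b (f y) z = - b y (f z)} -> (f @: K <= P)%VS ->
    {in P, forall w, {in P, forall z, b w z = 0} -> w = 0} ->
  (\dim (f @: K) <= \dim (f @: P))%N.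
Proof.
move=> skew_f fKP nondeg_P; set W := (f @: P)%VS.
(* On [K], the kernel of [y |-> b y] restricted to [W] is the kernel of [f],
   by skewness and non-degeneracy on [P]; its rank is at most [\dim W]. *)
pose pair y : 'Hom(subvs_of W, F^o) := linfun ((b y : V -> F^o) \o vsval).
have pairE y u : pair y u = b y (vsval u).
  by rewrite linfunE_linear // => a u1 u2 /=; rewrite form_linear_r.
have lin_pair : linear pair.
  by move=> a y y'; apply/lfunP => u; rewrite add_lfunE scale_lfunE !pairE form_linear_l.
have ker_pair : (K :&: lker (linfun pair))%VS = (K :&: lker f)%VS.
  apply/vspaceP => y; apply/memv_capP/memv_capP => -[yK]; rewrite !memv_ker.
    rewrite linfunE_linear // => /eqP pair0; split=> //; apply/eqP.
    apply: nondeg_P => [|z zP]; first exact/(subvP fKP)/memv_img.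
    have := congr1 (fun h : 'Hom(subvs_of W, F^o) => h (vsproj W (f z))) pair0.
    by rewrite pairE zero_lfunE vsprojK ?memv_img // skew_f // => ->; rewrite oppr0.
  move=> /eqP fy0; split=> //; rewrite linfunE_linear //; apply/eqP/lfunP => u.
  rewrite pairE zero_lfunE; have /memv_imgP[z zP ->] := subvsP u.
  by rewrite -[b y _]opprK -skew_f // fy0 (linear_fun0 (form_linear_l z)) oppr0.
have := limg_ker_dim (linfun pair) K; rewrite ker_pair -(limg_ker_dim f K) => /addnI <-.
by rewrite (leq_trans (dimvS (subvf _))) // dimvf /dim /= muln1.
Qed.

End Bilinear.

Lemma opp_fixed_eq0 (F : fieldType) (t : F) : 2 != 0 :> F -> t = - t -> t = 0.
Proof.
move=> two_neq0 /(congr1 (+%R^~ t)); rewrite addNr -mulr2n -mulr_natr => /eqP.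
by rewrite mulf_eq0 (negbTE two_neq0) orbF => /eqP.
Qed.

Section Involution.
Variables (F : fieldType) (V : vectType F) (theta : 'End(V)).

Lemma kspaceP u : reflect (theta u = u) (u \in kspace theta).
Proof. by rewrite memv_ker add_lfunE opp_lfunE id_lfunE subr_eq0; apply: eqP. Qed.

Lemma pspaceP u : reflect (theta u = - u) (u \in pspace theta).
Proof. by rewrite memv_ker add_lfunE id_lfunE addr_eq0; apply: eqP. Qed.

Hypotheses (theta_invol : (theta \o theta)%VF = \1%VF) (two_neq0 : 2 != 0 :> F).

Lemma kspace_pspace_cap (U : {vspace V}) :
  (theta @: U <= U)%VS -> (kspace theta :&: U + pspace theta :&: U)%VS = U.
Proof.
move=> thetaU; apply/eqP; rewrite eqEsubv subv_add !capvSr /=; apply/subvP => u uU.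
have thetaK v : theta (theta v) = v by rewrite -comp_lfunE theta_invol id_lfunE.
have thuU : theta u \in U by exact/(subvP thetaU)/memv_img.
have -> : u = 2^-1 *: (u + theta u) + 2^-1 *: (u - theta u).
  by rewrite -scalerDr addrACA subrr addr0 -mulr2n -scaler_nat scalerA mulVf ?scale1r.
apply: memv_add; apply/memv_capP; split.
- by apply/kspaceP; rewrite linearZ linearD /= thetaK addrC.
- by apply/memvZ/memvD.
- by apply/pspaceP; rewrite linearZ linearB /= thetaK -scalerN opprB.
- by apply/memvZ/memvB.
Qed.

Variables (b : V -> V -> F).
Hypotheses (bilin_b : bilinear_form b)
  (b_theta : forall y z, b (theta y) (theta z) = b y z).

Lemma form_kspace_pspace k p : k \in kspace theta -> p \in pspace theta -> b k p = 0.
Proof.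
move=> /kspaceP thk /pspaceP thp; apply: opp_fixed_eq0 => //.
by rewrite -{1}b_theta thk thp (linear_funN (form_linear_r bilin_b k)).
Qed.

Lemma form_pspace_kspace k p : k \in kspace theta -> p \in pspace theta -> b p k = 0.
Proof.
move=> /kspaceP thk /pspaceP thp; apply: opp_fixed_eq0 => //.
by rewrite -{1}b_theta thk thp (linear_funN (form_linear_l bilin_b k)).
Qed.

End Involution.

Section SymmetricSuperpair.
Variables (F : fieldType) (V : vectType F) (g0 g1 : {vspace V}).
Variables (br : V -> V -> V) (theta : 'End(V)) (b : V -> V -> F).

Local Notation k1 := (kspace theta :&: g1)%VS.
Local Notation p1 := (pspace theta :&: g1)%VS.

Hypotheses (two_neq0 : 2 != 0 :> F) (g_sum : (g0 + g1)%VS = fullv).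
Hypotheses (bilin_br : bilinear_br br)
  (br_g0g1 : forall x y, x \in g0 -> y \in g1 -> br x y \in g1)
  (br_skew_g0g1 : forall x y, x \in g0 -> y \in g1 -> br x y = - br y x).
Hypotheses (theta_invol : (theta \o theta)%VF = \1%VF)
  (theta_br : forall x y, theta (br x y) = br (theta x) (theta y))
  (theta_g1 : (theta @: g1 <= g1)%VS).
Hypotheses (bilin_b : bilinear_form b)
  (b_g1g0 : forall x y, x \in g0 -> y \in g1 -> b y x = 0)
  (b_invariant : forall x y z, b (br x y) z = b x (br y z))
  (b_theta : forall y z, b (theta y) (theta z) = b y z)
  (b_nondeg : forall y, (forall z, b y z = 0) -> y = 0).

Lemma adE x u : linfun (br x) u = br x u.
Proof. exact: (linfunE_linear (bracket_linear_r bilin_br x)). Qed.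

Lemma br_pspace_kspace x y :
  x \in pspace theta -> y \in kspace theta -> br x y \in pspace theta.
Proof.
move=> /pspaceP thx /kspaceP thy; apply/pspaceP.
by rewrite theta_br thx thy (linear_funN (bracket_linear_l bilin_br y)).
Qed.

Lemma br_pspace_pspace x y :
  x \in pspace theta -> y \in pspace theta -> br x y \in kspace theta.
Proof.
move=> /pspaceP thx /pspaceP thy; apply/kspaceP.
rewrite theta_br thx thy (linear_funN (bracket_linear_l bilin_br _)).
by rewrite (linear_funN (bracket_linear_r bilin_br x)) opprK.
Qed.

Lemma limg_ad_k1 x : x \in (pspace theta :&: g0)%VS -> (linfun (br x) @: k1 <= p1)%VS.
Proof.
move=> /memv_capP[xp xg0]; apply/subvP => _ /memv_imgP[y /memv_capP[yk yg1] ->].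
by rewrite adE memv_cap br_pspace_kspace ?br_g0g1.
Qed.

Lemma limg_ad_p1 x : x \in (pspace theta :&: g0)%VS -> (linfun (br x) @: p1 <= k1)%VS.
Proof.
move=> /memv_capP[xp xg0]; apply/subvP => _ /memv_imgP[y /memv_capP[yp yg1] ->].
by rewrite adE memv_cap br_pspace_pspace ?br_g0g1.
Qed.

Lemma form_ad_skew x y z : x \in g0 -> y \in g1 -> b (br x y) z = - b y (br x z).
Proof.
move=> xg0 yg1.
by rewrite br_skew_g0g1 // (linear_funN (form_linear_l bilin_b z)) b_invariant.
Qed.

Lemma form_nondegenerate_k1 : {in k1, forall w, {in k1, forall z, b w z = 0} -> w = 0}.
Proof.
apply: (form_nondegenerate_on bilin_b b_nondeg (C := (g0 + p1)%VS)).
  by rewrite addvA [(k1 + g0)%VS]addvC -addvA kspace_pspace_cap.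
move=> w _ /memv_capP[wk wg1] /memv_addP[c0 c0g0 [c1 /memv_capP[c1p _] ->]].
rewrite (linear_funD (form_linear_r bilin_b w)) b_g1g0 //.
by rewrite (form_kspace_pspace two_neq0 bilin_b b_theta) ?addr0.
Qed.

Lemma form_nondegenerate_p1 : {in p1, forall w, {in p1, forall z, b w z = 0} -> w = 0}.
Proof.
apply: (form_nondegenerate_on bilin_b b_nondeg (C := (g0 + k1)%VS)).
  by rewrite addvA [(p1 + g0)%VS]addvC -addvA [(p1 + k1)%VS]addvC kspace_pspace_cap.
move=> w _ /memv_capP[wp wg1] /memv_addP[c0 c0g0 [c1 /memv_capP[c1k _] ->]].
rewrite (linear_funD (form_linear_r bilin_b w)) b_g1g0 //.
by rewrite (form_pspace_kspace two_neq0 bilin_b b_theta) ?addr0.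
Qed.

Lemma dim_limg_ad_k1_p1 x : x \in (pspace theta :&: g0)%VS ->
  \dim (linfun (br x) @: k1) = \dim (linfun (br x) @: p1).
Proof.
move=> xpg0; have xg0 : x \in g0 by case/memv_capP: xpg0.
have skew_ad U W : (U <= g1)%VS ->
    {in U & W, forall y z, b (linfun (br x) y) z = - b y (linfun (br x) z)}.
  by move=> /subvP Ug1 y z /Ug1 yg1 _; rewrite !adE form_ad_skew.
apply/eqP; rewrite eqn_leq !(dim_limg_le_skew_adjoint bilin_b) ?limg_ad_k1 ?limg_ad_p1 //.
- by apply: skew_ad; exact: capvSr.
- exact: form_nondegenerate_k1.
- by apply: skew_ad; exact: capvSr.
- exact: form_nondegenerate_p1.
Qed.

End SymmetricSuperpair.

Theorem mainTheorem5 (F : closedFieldType) (charF0 : [pchar F] =i pred0)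
    (V : vectType F) (g0 g1 : {vspace V}) (br : V -> V -> V) (theta : 'End(V))
    (Hred : reductive_symmetric_superpair g0 g1 br theta)
    (x : V) (hx : x \in (pspace theta :&: g0)%VS) :
  (\dim (centralizer_in br (kspace theta :&: g1)%VS x))%:Z
    - (\dim (centralizer_in br (pspace theta :&: g1)%VS x))%:Z
  = (\dim (kspace theta :&: g1)%VS)%:Z - (\dim (pspace theta :&: g1)%VS)%:Z.
Proof.
case: Hred => [[[g_sum _] bilin_br br_graded br_skew _]
  [theta_invol theta_br _ theta_g1] _ _
  [b [[bilin_b b_g0g1] _ b_invariant b_theta b_nondeg]]].
have two_neq0 : 2 != 0 :> F by move/pcharf0P: charF0 => ->.
have br_g0g1 y z : y \in g0 -> z \in g1 -> br y z \in g1 by exact: (br_graded false true).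
have br_skew_g0g1 y z : y \in g0 -> z \in g1 -> br y z = - br z y.
  by move=> yg0 zg1; rewrite (br_skew false true) // /ssign expr0 scale1r.
have b_g1g0 y z : y \in g0 -> z \in g1 -> b z y = 0 by move=> yg0 /(b_g0g1 y)[].
rewrite /centralizer_in -(limg_ker_dim (linfun (br x)) (kspace theta :&: g1)).
rewrite -(limg_ker_dim (linfun (br x)) (pspace theta :&: g1)).
rewrite (dim_limg_ad_k1_p1 two_neq0 g_sum bilin_br br_g0g1 br_skew_g0g1 theta_invol
  theta_br theta_g1 bilin_b b_g1g0 b_invariant b_theta b_nondeg hx).
by rewrite !PoszD opprD addrACA subrr addr0.
Qed.
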